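(* Let $F=\langle f_1,\ldots,f_k\rangle$ be a normalized solution to an instance $(\mathcal{T}_{initial},\mathcal{T}_{final},k)$ of Flip Distance, and let $C$ be a component of $\mathcal{D}_F$. Let $f_i$ and $f_h$, with $i<h$ and $\epsilon(f_i)\ne\epsilon(f_h)$, be two flips in $C$ such that $\phi(f_h)$ crosses $\epsilon(f_i)$ and $\epsilon(f_i)$ is not flipped between $f_i$ and $f_h$ (i.e., there is no $p$ with $i<p<h$ and $\epsilon(f_p)=\epsilon(f_i)$). Then there is a directed path from $f_i$ to $f_h$ in $C$.
   Context: A triangulation of a finite point set $\mathcal{P}$ in the plane is a partition of the convex hull of $\mathcal{P}$ into triangles whose vertex set is $\mathcal{P}$. For an interior edge $e$ of a triangulation $\mathcal{T}$, the quadrilateral associated with $e$ is the union of the two triangles of $\mathcal{T}$ sharing $e$. A flip $f$ with underlying edge $\epsilon(f)=e$ is admissible in $\mathcal{T}$ if $e\in\mathcal{T}$ and its associated quadrilateral is convex; performing it replaces $e$ by the other diagonal $\phi(f)$ of that quadrilateral. Two distinct edges share a triangle in $\mathcal{T}$ if they are edges of the same triangle of $\mathcal{T}$; two edges between points of $\mathcal{P}$ cross if they intersect in their interiors. A sequence $F=\langle f_1,\ldots,f_r\rangle$ is valid with respect to $\mathcal{T}$ if there are triangulations $\mathcal{T}_0=\mathcal{T},\mathcal{T}_1,\ldots,\mathcal{T}_r$ such that $f_i$ is admissible in $\mathcal{T}_{i-1}$ and performing it yields $\mathcal{T}_i$; then we write $\mathcal{T}\xrightarrow{F}\mathcal{T}_r$.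 Flips in a sequence are distinct objects even if they have the same underlying edge. For $1\le i<j\le r$, flip $f_j$ is adjacent to $f_i$ (written $f_i\to f_j$) if (1) either $\phi(f_i)=\epsilon(f_j)$ or $\phi(f_i)$ and $\epsilon(f_j)$ share a triangle in $\mathcal{T}_{j-1}$, and (2) there is no $p$ with $i<p<j$ and $\epsilon(f_p)=\phi(f_i)$. $\mathcal{D}_F$ is the directed acyclic graph whose nodes are the flips of $F$ and whose arcs are the pairs $f_i\to f_j$; a component of it is a weakly connected component. The flip distance between two triangulations is the minimum length of a valid sequence transforming one into the other. An instance $(\mathcal{T}_{initial},\mathcal{T}_{final},k)$ of Flip Distance consists of two triangulations of $\mathcal{P}$ and $k\in\mathbb{N}$; a solution is a valid sequence $F$ of length $k$ with $\mathcal{T}_{initial}\xrightarrow{F}\mathcal{T}_{final}$, where $k$ is the flip distance between them. For a solution $F=\langle f_1,\ldots,f_k\rangle$, $\mathcal{T}_j$ denotes the outcome of applying $\langle f_1,\ldots,f_j\rangle$ to $\mathcal{T}_{initial}$. A changed edge is an edge of $\mathcal{T}_{initial}$ not in $\mathcal{T}_{final}$; a component of $\mathcal{D}_F$ is essential if it contains a flip whose underlying edge is a changed edge. A solution $F$ is normalized if every component of $\mathcal{D}_F$ is essential and the flips of each component of $\mathcal{D}_F$ appear as a consecutive block in $F$. *)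

From HB Require Import structures.
From mathcomp Require Import all_boot all_order all_algebra.
Unset Printing Implicit Defensive.
Import Order.TTheory GRing.Theory Num.Theory.
Local Open Scope ring_scope.

Section Geometry.
Variables (R : realFieldType) (n : nat) (P : 'I_n -> (R * R)%type).

Definition conv (S : {set 'I_n}) (x : R * R) : Prop :=
  exists w : 'I_n -> R,
    [/\ (forall i, 0 <= w i), (forall i, i \notin S -> w i = 0),
        \sum_i w i = 1 &
        x = (\sum_i w i * (P i).1, \sum_i w i * (P i).2)].

Definition lerp (a b : R * R) (s : R) : R * R :=
  ((1 - s) * a.1 + s * b.1, (1 - s) * a.2 + s * b.2).

Definition convex_set (S : R * R -> Prop) : Prop :=
  forall x y l, S x -> S y -> 0 <= l <= 1 -> S (lerp x y l).

Definition orient (a b c : R * R) : R :=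
  (b.1 - a.1) * (c.2 - a.2) - (b.2 - a.2) * (c.1 - a.1).

Definition triangle (t : {set 'I_n}) : Prop :=
  exists a b c, t = [set a; b; c] /\ orient (P a) (P b) (P c) != 0.

(* A triangulation of P: a set of non-degenerate triangles forming a
   simplicial complex (any two meet in the hull of their common vertices)
   whose union is the convex hull of P and whose vertex set is P. *)
Definition triangulation (T : {set {set 'I_n}}) : Prop :=
  [/\ (forall t, t \in T -> triangle t),
      (forall t1 t2, t1 \in T -> t2 \in T ->
         forall x, (conv t1 x /\ conv t2 x) <-> conv (t1 :&: t2) x),
      (forall x, conv setT x <-> exists2 t, t \in T & conv t x) &
      (forall v, exists2 t, t \in T & v \in t)].

Definition crosses (e e' : {set 'I_n}) : Prop :=
  e != e' /\
  exists a b c d (s u : R),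
    [/\ e = [set a; b], e' = [set c; d], 0 < s < 1, 0 < u < 1 &
        lerp (P a) (P b) s = lerp (P c) (P d) u].

End Geometry.
Arguments conv {R n}. Arguments lerp {R}. Arguments convex_set {R}. Arguments orient {R}.
Arguments triangle {R n}. Arguments triangulation {R n}. Arguments crosses {R n}.

Section Combinatorics.
Variable n : nat.
Implicit Types (T : {set {set 'I_n}}) (e : {set 'I_n}) (F : seq {set 'I_n}).

Definition edges T : {set {set 'I_n}} :=
  [set e : {set 'I_n} | (#|e| == 2)%N && [exists t in T, e \subset t]].

(* the other diagonal of the quadrilateral associated with e in T *)
Definition phi T e : {set 'I_n} :=
  (\bigcup_(t in T | e \subset t) t) :\: e.

Definition flip_res T e : {set {set 'I_n}} :=
  [set t in T | ~~ (e \subset t)] :|: [set phi T e :|: [set v] | v in e].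

Definition outcome T F (j : nat) : {set {set 'I_n}} :=
  foldl flip_res T (take j F).

Definition share_tri T e e' : bool :=
  (e != e') && [exists t in T, (e \subset t) && (e' \subset t)].

(* underlying edge and new edge of the flip with (0-based) index a *)
Definition eps F (a : nat) : {set 'I_n} := nth set0 F a.
Definition phiF T F (a : nat) : {set 'I_n} := phi (outcome T F a) (eps F a).

(* arc f_a -> f_b of D_F (0-based indices; T_{b} is the triangulation in
   which flip b is performed) *)
Definition adjD T F (a b : 'I_(size F)) : bool :=
  [&& (a < b)%N,
      (phiF T F a == eps F b) || share_tri (outcome T F b) (phiF T F a) (eps F b)
    & [forall p : 'I_(size F),
         ((a < p)%N && (p < b)%N) ==> (eps F p != phiF T F a)]].

Definition wadj T F : rel 'I_(size F) := fun a b => adjD T F a b || adjD T F b a.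

Definition component T F (C : {set 'I_(size F)}) : Prop :=
  exists v : 'I_(size F), C = [set u | connect (wadj T F) v u].

Definition changed Ti Tf : {set {set 'I_n}} := edges Ti :\: edges Tf.

Definition essential Ti Tf F (C : {set 'I_(size F)}) : Prop :=
  exists2 q, q \in C & eps F q \in changed Ti Tf.

Definition normalized Ti Tf F : Prop :=
  forall C : {set 'I_(size F)}, component Ti F C ->
    essential Ti Tf F C /\
    (forall a b c : 'I_(size F), (a <= c)%N -> (c <= b)%N ->
        a \in C -> b \in C -> c \in C).

End Combinatorics.
Arguments edges {n}. Arguments phi {n}. Arguments flip_res {n}. Arguments outcome {n}.
Arguments share_tri {n}. Arguments eps {n}. Arguments phiF {n}. Arguments adjD {n}.
Arguments wadj {n}. Arguments component {n}. Arguments changed {n}. Arguments essential {n}.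
Arguments normalized {n}.

Section Flips.
Variables (R : realFieldType) (n : nat) (P : 'I_n -> (R * R)%type).

(* e is an interior edge of T (shared by two triangles) whose quadrilateral is convex *)
Definition admissible (T : {set {set 'I_n}}) (e : {set 'I_n}) : Prop :=
  [/\ e \in edges T, #|[set t in T | e \subset t]| = 2 &
      convex_set (fun x => exists t, [/\ t \in T, e \subset t & conv P t x])].

Definition valid (T : {set {set 'I_n}}) (F : seq {set 'I_n}) (T' : {set {set 'I_n}}) : Prop :=
  [/\ triangulation P T,
      (forall j, (j < size F)%N ->
          admissible (outcome T F j) (eps F j) /\ triangulation P (outcome T F j.+1)) &
      outcome T F (size F) = T'].

Definition flip_distance_is (Ti Tf : {set {set 'I_n}}) (k : nat) : Prop :=
  (exists G, valid Ti G Tf /\ size G = k) /\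
  (forall G, valid Ti G Tf -> (k <= size G)%N).

Definition solution (Ti Tf : {set {set 'I_n}}) (k : nat) (F : seq {set 'I_n}) : Prop :=
  [/\ triangulation P Ti, triangulation P Tf, valid Ti F Tf, size F = k &
      flip_distance_is Ti Tf k].

End Flips.
Arguments admissible {R n}. Arguments valid {R n}. Arguments flip_distance_is {R n}. Arguments solution {R n}.

(* Let e be the edge flipped by f_i.  For i < j <= h, e is not an edge of T_j:
   otherwise it would survive up to T_(h+1), which also contains phi(f_h), and
   two edges of one triangulation never cross.  Hence, by induction on j, every
   edge of T_j crossing e was created by some flip f_p reachable from f_i and
   not flipped since.  When the new diagonal phi(f_j) crosses e, a crossing
   point lies in the convex quadrilateral of f_j, i.e. in a triangle t of T_j
   containing eps(f_j); as e is not an edge of T_j, the segment e leaves t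
   through an edge g of t that crosses e.  The edge g is eps(f_j) or shares t
   with it, so its creator f_p satisfies f_p -> f_j.  For j = h this gives the
   path; it stays in C because C is a weakly connected component. *)

From mathcomp Require Import all_boot all_order all_algebra.
From mathcomp Require Import ring lra zify.
Import Order.TTheory GRing.Theory Num.Theory.
Set Implicit Arguments. Unset Strict Implicit.

Section Geometry.
Local Open Scope ring_scope.
Variables (R : realFieldType) (n : nat) (P : 'I_n -> (R * R)%type).
Implicit Types (T : {set {set 'I_n}}) (t e g : {set 'I_n}).

Definition barycenter (w : 'I_n -> R) : R * R :=
  (\sum_i w i * (P i).1, \sum_i w i * (P i).2).

Definition wdelta (a : 'I_n) (c : R) : 'I_n -> R :=
  fun i => if i == a then c else 0.

Definition wseg (a b : 'I_n) (s : R) : 'I_n -> R :=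
  fun i => wdelta a (1 - s) i + wdelta b s i.

Lemma sum_wdeltaM a c (f : 'I_n -> R) : \sum_i wdelta a c i * f i = c * f a.
Proof.
rewrite (bigD1 a) //= big1 ?addr0; first by rewrite /wdelta eqxx.
by move=> i /negbTE; rewrite /wdelta => ->; rewrite mul0r.
Qed.

Lemma sum_wsegM a b s (f : 'I_n -> R) :
  \sum_i wseg a b s i * f i = (1 - s) * f a + s * f b.
Proof.
by rewrite -!sum_wdeltaM -big_split; apply: eq_bigr => i _; rewrite mulrDl.
Qed.

Lemma sum_wdelta a c : \sum_i wdelta a c i = c.
Proof.
transitivity (\sum_i wdelta a c i * 1); first by apply: eq_bigr => i _; rewrite mulr1.
by rewrite sum_wdeltaM mulr1.
Qed.

Lemma sum_wseg a b s : \sum_i wseg a b s i = 1.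
Proof.
transitivity (\sum_i wseg a b s i * 1); first by apply: eq_bigr => i _; rewrite mulr1.
by rewrite sum_wsegM !mulr1 subrK.
Qed.

Lemma barycenter_wdelta u : barycenter (wdelta u 1) = P u.
Proof. by rewrite /barycenter !sum_wdeltaM !mul1r -surjective_pairing. Qed.

Lemma barycenter_wseg a b s : barycenter (wseg a b s) = lerp (P a) (P b) s.
Proof. by rewrite /barycenter !sum_wsegM. Qed.

Lemma wdelta_out a c i : i != a -> wdelta a c i = 0.
Proof. by rewrite /wdelta => /negbTE ->. Qed.

Lemma wseg_out a b s i : i != a -> i != b -> wseg a b s i = 0.
Proof. by move=> ia ib; rewrite /wseg !wdelta_out ?addr0. Qed.

Lemma wseg_l a b s : a != b -> wseg a b s a = 1 - s.
Proof. by move=> ab; rewrite /wseg /wdelta eqxx (negbTE ab) addr0. Qed.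

Lemma wseg_r a b s : a != b -> wseg a b s b = s.
Proof. by move=> ab; rewrite /wseg /wdelta eqxx eq_sym (negbTE ab) add0r. Qed.

Lemma wdelta_supp t u c : u \in t ->
  forall i, i \notin t -> wdelta u c i = 0.
Proof. by move=> ut i iNt; apply: wdelta_out; apply: contraNneq iNt => ->. Qed.

Lemma wseg_supp t a b s : a \in t -> b \in t ->
  forall i, i \notin t -> wseg a b s i = 0.
Proof. by move=> ha hb i iNt; apply: wseg_out; apply: contraNneq iNt => ->. Qed.

Lemma conv_vertex t u : u \in t -> conv P t (P u).
Proof.
move=> ut; exists (wdelta u 1); split.
- by move=> i; rewrite /wdelta; case: ifP.
- exact: wdelta_supp.
- exact: sum_wdelta.
- by rewrite -[in LHS]barycenter_wdelta.
Qed.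

Lemma conv_lerp t a b s : a \in t -> b \in t -> 0 <= s <= 1 ->
  conv P t (lerp (P a) (P b) s).
Proof.
move=> ha hb /andP[s0 s1]; exists (wseg a b s); split.
- by move=> i; rewrite /wseg /wdelta; do 2!case: ifP => _; rewrite ?addr0 ?add0r //; lra.
- exact: wseg_supp.
- exact: sum_wseg.
- by rewrite -barycenter_wseg.
Qed.

Lemma sum_supp3 (f : 'I_n -> R) p q r : p != q -> q != r -> p != r ->
  (forall i, i \notin [set p; q; r] -> f i = 0) -> \sum_i f i = f p + f q + f r.
Proof.
move=> pq qr pr f0.
rewrite (bigD1 p) //= (bigD1 q) /= ?(eq_sym q) // (bigD1 r) /= ?(eq_sym r) ?pr ?qr //.
rewrite big1 ?addr0 ?addrA // => i /andP[/andP[ip iq] ir].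
by apply: f0; rewrite !inE !negb_or ip iq ir.
Qed.

Lemma affine_indep3 (a b c : R * R) (l1 l2 l3 : R) : orient a b c != 0 ->
  l1 + l2 + l3 = 0 -> l1 * a.1 + l2 * b.1 + l3 * c.1 = 0 ->
  l1 * a.2 + l2 * b.2 + l3 * c.2 = 0 -> [/\ l1 = 0, l2 = 0 & l3 = 0].
Proof.
case: a b c => [x1 y1] [x2 y2] [x3 y3]; rewrite /orient /= => hD h0 h1 h2.
have e2 : l2 * ((x2 - x1) * (y3 - y1) - (y2 - y1) * (x3 - x1)) =
   (y3 - y1) * ((l1 * x1 + l2 * x2 + l3 * x3) - x1 * (l1 + l2 + l3))
 - (x3 - x1) * ((l1 * y1 + l2 * y2 + l3 * y3) - y1 * (l1 + l2 + l3)) by ring.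
have e3 : l3 * ((x2 - x1) * (y3 - y1) - (y2 - y1) * (x3 - x1)) =
 - ((y2 - y1) * ((l1 * x1 + l2 * x2 + l3 * x3) - x1 * (l1 + l2 + l3))
 - (x2 - x1) * ((l1 * y1 + l2 * y2 + l3 * y3) - y1 * (l1 + l2 + l3))) by ring.
rewrite h0 h1 h2 !(mulr0, subr0, oppr0) in e2 e3.
move/eqP: e2; rewrite mulf_eq0 (negbTE hD) orbF => /eqP l20.
move/eqP: e3; rewrite mulf_eq0 (negbTE hD) orbF => /eqP l30.
by split=> //; move: h0; rewrite l20 l30 !addr0.
Qed.

Lemma orient_neq0_distinct p q r : orient (P p) (P q) (P r) != 0 ->
  [/\ p != q, q != r & p != r].
Proof.
move=> hD; split; apply: contraNneq hD => ->; rewrite /orient; apply/eqP; ring.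
Qed.

Lemma barycenter_inj t (w1 w2 : 'I_n -> R) : triangle P t ->
  (forall i, i \notin t -> w1 i = 0) -> (forall i, i \notin t -> w2 i = 0) ->
  \sum_i w1 i = \sum_i w2 i -> barycenter w1 = barycenter w2 -> w1 =1 w2.
Proof.
case=> [p [q [r [-> hD]]]] w1S w2S sw [bx1 bx2].
have [pq qr pr] := orient_neq0_distinct hD.
pose d i := w1 i - w2 i.
have d0 i : i \notin [set p; q; r] -> d i = 0 by move=> iNt; rewrite /d w1S ?w2S ?subrr.
have sum_d f : \sum_i d i * f i = d p * f p + d q * f q + d r * f r.
  by apply: sum_supp3 => // i /d0 ->; rewrite mul0r.
have sum_dB f : \sum_i d i * f i = \sum_i w1 i * f i - \sum_i w2 i * f i.
  by rewrite -sumrB; apply: eq_bigr => i _; rewrite mulrBl.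
have [] := affine_indep3 (l1 := d p) (l2 := d q) (l3 := d r) hD.
- by rewrite -(sum_supp3 pq qr pr d0) /d sumrB sw subrr.
- by rewrite -(sum_d (fun i => (P i).1)) sum_dB bx1 subrr.
- by rewrite -(sum_d (fun i => (P i).2)) sum_dB bx2 subrr.
move=> /eqP dp /eqP dq /eqP dr i; apply/eqP; rewrite -subr_eq0.
have [|iNt] := boolP (i \in [set p; q; r]); last by rewrite w1S ?w2S ?subrr.
by rewrite !inE => /orP[/orP[]|] /eqP ->.
Qed.

Lemma mem_of_conv_vertex T t u : triangulation P T -> t \in T -> conv P t (P u) ->
  u \in t.
Proof.
move=> HT tT ut; have [triT meetT _ coverT] := HT.
have [t' t'T ut'] := coverT u.
have [w [_ wS w1 wP]] := (meetT t t' tT t'T (P u)).1 (conj ut (conv_vertex ut')).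
have wu : w =1 wdelta u 1.
  apply: (barycenter_inj (triT t' t'T)).
  - by move=> i it'; apply: wS; rewrite inE negb_and it' orbT.
  - exact: wdelta_supp.
  - by rewrite w1 sum_wdelta.
  - by rewrite barycenter_wdelta wP.
have : w u != 0 by rewrite wu /wdelta eqxx oner_neq0.
by apply: contraNT => uNt; rewrite wS // inE negb_and uNt.
Qed.

Lemma vertex_notin_open_edge T t a b u s : triangulation P T -> t \in T ->
  a \in t -> b \in t -> a != b -> 0 < s < 1 -> P u <> lerp (P a) (P b) s.
Proof.
move=> HT tT ha hb ab /andP[s0 s1] Eu.
have ut : u \in t.
  by apply: mem_of_conv_vertex HT tT _; rewrite Eu; apply: conv_lerp; rewrite // !ltW.
have [triT _ _ _] := HT.
have E : wseg a b s =1 wdelta u 1.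
  apply: (barycenter_inj (triT t tT)); [exact: wseg_supp | exact: wdelta_supp | |].
  - by rewrite sum_wseg sum_wdelta.
  - by rewrite barycenter_wseg barycenter_wdelta Eu.
by move: (E a); rewrite wseg_l // /wdelta; case: ifP => _; lra.
Qed.

Lemma edges2 T a b : [set a; b] \in edges T ->
  a != b /\ exists2 t, t \in T & (a \in t) && (b \in t).
Proof.
rewrite inE cards2 => /andP[ab /exists_inP[t tT abt]]; split; first by case: (a != b) ab.
by exists t => //; rewrite !(subsetP abt) // !inE eqxx ?orbT.
Qed.

Lemma edges_of_sub T t g : t \in T -> g \subset t -> #|g| = 2 -> g \in edges T.
Proof. by move=> tT gt cg; rewrite inE cg eqxx; apply/exists_inP; exists t. Qed.

Lemma edges_of_mem T t a b : t \in T -> a \in t -> b \in t -> a != b ->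
  [set a; b] \in edges T.
Proof.
by move=> tT ha hb ab; rewrite (edges_of_sub tT) ?cards2 ?ab // subUset !sub1set ha hb.
Qed.

Lemma edges_noncrossing T g g' : triangulation P T -> g \in edges T ->
  g' \in edges T -> ~ crosses P g g'.
Proof.
move=> HT gT g'T [gg' [a [b [c [d [s [u [Eg Eg' /andP[s0 s1] /andP[u0 u1] Ex]]]]]]]].
move: gT g'T; rewrite Eg Eg' => /edges2[ab [t1 t1T /andP[a1 b1]]].
move=> /edges2[cd [t2 t2T /andP[c2 d2]]].
have [triT meetT _ _] := HT.
have x1 : conv P t1 (lerp (P a) (P b) s) by apply: conv_lerp; rewrite // !ltW.
have x2 : conv P t2 (lerp (P a) (P b) s) by rewrite Ex; apply: conv_lerp; rewrite // !ltW.
have [w [_ wS w1 wx]] := (meetT t1 t2 t1T t2T _).1 (conj x1 x2).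
have wab : w =1 wseg a b s.
  apply: (barycenter_inj (triT t1 t1T)); last by rewrite barycenter_wseg wx.
  - by move=> i it1; apply: wS; rewrite inE negb_and it1.
  - exact: wseg_supp.
  - by rewrite w1 sum_wseg.
have wcd : w =1 wseg c d u.
  apply: (barycenter_inj (triT t2 t2T)); last by rewrite barycenter_wseg -Ex wx.
  - by move=> i it2; apply: wS; rewrite inE negb_and it2 orbT.
  - exact: wseg_supp.
  - by rewrite w1 sum_wseg.
have in_cd x : wseg a b s x != 0 -> x \in [set c; d].
  rewrite -wab wcd; apply: contraNT; rewrite !inE negb_or => /andP[xc xd].
  by rewrite wseg_out.
apply: (negP gg'); rewrite Eg Eg' eqEcard !cards2 ab cd leqnn andbT.
apply/subsetP => x /set2P[]-> ; apply: in_cd.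
- by rewrite wseg_l //; apply/eqP; lra.
- by rewrite wseg_r //; apply/eqP; lra.
Qed.

Definition segments_meet a b c d : Prop :=
  exists s u, [/\ 0 < s < 1, 0 < u < 1 & lerp (P a) (P b) s = lerp (P c) (P d) u].

Lemma lerpC (x y : R * R) s : lerp x y s = lerp y x (1 - s).
Proof. by rewrite /lerp /=; congr pair; ring. Qed.

Lemma lerp0 (x y : R * R) : lerp x y 0 = x.
Proof. by rewrite /lerp !mul0r !addr0 subr0 !mul1r -surjective_pairing. Qed.

Lemma lerp1 (x y : R * R) : lerp x y 1 = y.
Proof. by rewrite /lerp subrr !mul0r !add0r !mul1r -surjective_pairing. Qed.

Lemma segments_meetC_r a b c d : segments_meet a b c d -> segments_meet a b d c.
Proof.
case=> s [u [s01 /andP[u0 u1] E]]; exists s, (1 - u); split=> //.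
  by apply/andP; split; lra.
by rewrite E lerpC.
Qed.

Lemma segments_meet_of_lerp T t a b v w l s : triangulation P T -> t \in T ->
  v \in t -> w \in t -> v != w -> 0 < s < 1 -> 0 <= l <= 1 ->
  lerp (P a) (P b) l = lerp (P v) (P w) s -> segments_meet a b v w.
Proof.
move=> HT tT vt wt vw s01 /andP[l0 l1] E; exists l, s; split=> //.
have notv x : P x <> lerp (P v) (P w) s := vertex_notin_open_edge HT tT vt wt vw s01.
rewrite !lt_def l0 l1 !andbT; apply/andP; split; apply/eqP => El.
- by apply: (notv a); rewrite -E El lerp0.
- by apply: (notv b); rewrite -E -El lerp1.
Qed.

Definition comb3 (x y z : R * R) (l1 l2 l3 : R) : R * R :=
  (l1 * x.1 + l2 * y.1 + l3 * z.1, l1 * x.2 + l2 * y.2 + l3 * z.2).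

Lemma comb3_lerp x y z a1 a2 a3 b1 b2 b3 s :
  lerp (comb3 x y z a1 a2 a3) (comb3 x y z b1 b2 b3) s =
  comb3 x y z ((1 - s) * a1 + s * b1) ((1 - s) * a2 + s * b2) ((1 - s) * a3 + s * b3).
Proof. by rewrite /lerp /comb3 /=; congr pair; ring. Qed.

Lemma lerp_lerp (x y : R * R) s s' : lerp (lerp x y s) x s' = lerp x y ((1 - s') * s).
Proof. by rewrite /lerp /=; congr pair; ring. Qed.

Lemma comb3_cramer x y z : orient x y z != 0 ->
  forall v, exists l1 l2 l3, l1 + l2 + l3 = 1 /\ v = comb3 x y z l1 l2 l3.
Proof.
move=> hD v; exists (orient v y z / orient x y z), (orient x v z / orient x y z),
  (orient x y v / orient x y z).
move: hD; case: x y z v => [x1 x2] [y1 y2] [z1 z2] [v1 v2]; rewrite /orient /comb3 /= => hD.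
by split; [field | congr pair; field].
Qed.

Lemma conv_comb3 t p q r y : t = [set p; q; r] -> orient (P p) (P q) (P r) != 0 ->
  conv P t y -> exists l1 l2 l3, [/\ 0 <= l1, 0 <= l2, 0 <= l3, l1 + l2 + l3 = 1 &
    y = comb3 (P p) (P q) (P r) l1 l2 l3].
Proof.
move=> -> hD [w [w0 wS w1 ->]]; have [pq qr pr] := orient_neq0_distinct hD.
have sum_w f : \sum_i w i * f i = w p * f p + w q * f q + w r * f r.
  by apply: sum_supp3 => // i /wS ->; rewrite mul0r.
exists (w p), (w q), (w r); split => //; first by rewrite -w1 (sum_supp3 pq qr pr wS).
by rewrite (sum_w (fun i => (P i).1)) (sum_w (fun i => (P i).2)).
Qed.

Lemma comb3_conv t p q r l1 l2 l3 : t = [set p; q; r] ->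
  0 <= l1 -> 0 <= l2 -> 0 <= l3 -> l1 + l2 + l3 = 1 ->
  conv P t (comb3 (P p) (P q) (P r) l1 l2 l3).
Proof.
move=> -> h1 h2 h3 hs; pose w i := wdelta p l1 i + wdelta q l2 i + wdelta r l3 i.
have sum_w f : \sum_i w i * f i = l1 * f p + l2 * f q + l3 * f r.
  by rewrite -!sum_wdeltaM -!big_split; apply: eq_bigr => i _; rewrite !mulrDl.
exists w; split.
- by move=> i; rewrite /w /wdelta; do 3!case: ifP => _; rewrite ?addr0 ?add0r //;
    rewrite ?addr_ge0.
- move=> i; rewrite !inE !negb_or => /andP[/andP[ip iq] ir].
  by rewrite /w !wdelta_out // !addr0.
- transitivity (\sum_i w i * 1); first by apply: eq_bigr => i _; rewrite mulr1.
  by rewrite sum_w !mulr1.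
- by rewrite /comb3 (sum_w (fun i => (P i).1)) (sum_w (fun i => (P i).2)).
Qed.

Lemma comb3_on_edge t p q r k1 k2 k3 : t = [set p; q; r] ->
  orient (P p) (P q) (P r) != 0 -> 0 <= k1 -> 0 <= k2 -> 0 <= k3 ->
  k1 + k2 + k3 = 1 -> [\/ k1 = 0, k2 = 0 | k3 = 0] ->
  exists a b l, [/\ a \in t, b \in t, a != b, 0 <= l <= 1 &
    comb3 (P p) (P q) (P r) k1 k2 k3 = lerp (P a) (P b) l].
Proof.
move=> Et hD h1 h2 h3 hs hz; have [pq qr pr] := orient_neq0_distinct hD.
have mem x : x \in [set p; q; r] -> x \in t by rewrite Et.
case: hz => z0; [exists q, r, k3 | exists p, r, k3 | exists p, q, k2];
  (split; [by apply: mem; rewrite !inE eqxx ?orbT .. | by [] | apply/andP; split; lra |]);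
  by rewrite /comb3 /lerp -hs z0 /=; congr pair; ring.
Qed.

Definition exit_time (a b : R) : R := if b < 0 then a / (a - b) else 1.

Lemma exit_time_ge0 a b : 0 <= a -> 0 <= exit_time a b.
Proof.
move=> a0; rewrite /exit_time; case: (ltP b 0) => b0; last exact: ler01.
by rewrite divr_ge0 //; lra.
Qed.

Lemma exit_time_lt1 a b : 0 <= a -> b < 0 -> exit_time a b < 1.
Proof.
by move=> a0 b0; rewrite /exit_time b0 ltr_pdivrMr ?mul1r; lra.
Qed.

Lemma lerp_ge0_before_exit a b s : 0 <= a -> 0 <= s -> s <= exit_time a b ->
  0 <= (1 - s) * a + s * b.
Proof.
rewrite /exit_time; case: (ltP b 0) => b0 a0 s0; last first.
  by move=> s1; rewrite addr_ge0 ?mulr_ge0 ?subr_ge0.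
rewrite ler_pdivlMr; last lra.
have -> : (1 - s) * a + s * b = a - s * (a - b) by ring.
lra.
Qed.

Lemma lerp_at_exit a b : 0 <= a -> exit_time a b < 1 ->
  (1 - exit_time a b) * a + exit_time a b * b = 0.
Proof.
move=> a0; rewrite /exit_time; case: (ltP b 0) => b0; last by rewrite ltxx.
have ab : a - b != 0 by rewrite subr_eq0 gt_eqF //; lra.
have -> : (1 - a / (a - b)) * a + a / (a - b) * b = a - a / (a - b) * (a - b) by ring.
by rewrite divfK // subrr.
Qed.

Lemma first_exit (a1 a2 a3 b1 b2 b3 : R) : 0 <= a1 -> 0 <= a2 -> 0 <= a3 ->
  [\/ b1 < 0, b2 < 0 | b3 < 0] ->
  exists s, let k1 := (1 - s) * a1 + s * b1 in let k2 := (1 - s) * a2 + s * b2 in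
    let k3 := (1 - s) * a3 + s * b3 in
    [/\ 0 <= s < 1, [/\ 0 <= k1, 0 <= k2 & 0 <= k3] & [\/ k1 = 0, k2 = 0 | k3 = 0]].
Proof.
move=> h1 h2 h3 hb.
pose s := Num.min (exit_time a1 b1) (Num.min (exit_time a2 b2) (exit_time a3 b3)).
have [s1 [s2 s3]] : [/\ s <= exit_time a1 b1, s <= exit_time a2 b2 & s <= exit_time a3 b3].
  by have := lexx s; rewrite {2}/s !le_min => /andP[-> /andP[-> ->]].
have s_eq : [\/ s = exit_time a1 b1, s = exit_time a2 b2 | s = exit_time a3 b3].
  rewrite /s minEle; case: ifP => _; first exact: Or31.
  by rewrite minEle; case: ifP => _; [apply: Or32 | apply: Or33].
have s0 : 0 <= s by case: s_eq => ->; apply: exit_time_ge0.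
have s_lt1 : s < 1.
  case: hb => hb; [exact: le_lt_trans s1 (exit_time_lt1 h1 hb)
    | exact: le_lt_trans s2 (exit_time_lt1 h2 hb)
    | exact: le_lt_trans s3 (exit_time_lt1 h3 hb)].
exists s => k1 k2 k3; split; first by rewrite s0 s_lt1.
  by split; apply: lerp_ge0_before_exit.
by case: s_eq => E; [apply: Or31 | apply: Or32 | apply: Or33];
  rewrite /k1 /k2 /k3 E lerp_at_exit // -E.
Qed.

Lemma leave_triangle T t T0 t0 v w s : triangulation P T -> t \in T ->
  triangulation P T0 -> t0 \in T0 -> v \in t0 -> w \in t0 -> v != w -> 0 < s < 1 ->
  conv P t (lerp (P v) (P w) s) ->
  v \in t \/ exists a b, [/\ a \in t, b \in t, a != b & segments_meet a b v w].
Proof.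
move=> HT tT HT0 t0T0 vt0 wt0 vw /andP[s0 s1] yt; have [triT _ _ _] := HT.
have [p [q [r [Et hD]]]] := triT t tT.
have [a1 [a2 [a3 [h1 h2 h3 sa Ea]]]] := conv_comb3 Et hD yt.
have [b1 [b2 [b3 [sb Eb]]]] := comb3_cramer hD (P v).
have [/and3P[g1 g2 g3]|] := boolP [&& 0 <= b1, 0 <= b2 & 0 <= b3].
  by left; apply: (mem_of_conv_vertex HT tT); rewrite Eb; apply: comb3_conv.
rewrite !negb_and -!ltNge => /or3P hb.
(* Walk from the point of vw inside t towards v until a barycentric coordinate
   vanishes: the point reached lies on an edge of t and strictly inside vw. *)
have [tau [/andP[tau0 tau1] [k1 k2 k3] kz]] := first_exit h1 h2 h3 hb.
have sk : (1 - tau) * a1 + tau * b1 + ((1 - tau) * a2 + tau * b2) +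
    ((1 - tau) * a3 + tau * b3) = 1.
  transitivity ((1 - tau) * (a1 + a2 + a3) + tau * (b1 + b2 + b3)); first ring.
  by rewrite sa sb; ring.
have [a [b [l [ha hb' ab l01 El]]]] := comb3_on_edge Et hD k1 k2 k3 sk kz.
right; exists a, b; split=> //.
apply: (segments_meet_of_lerp (s := (1 - tau) * s) HT0 t0T0 vt0 wt0 vw _ l01).
  by apply/andP; split; nra.
by rewrite -El -comb3_lerp -Ea -Eb lerp_lerp.
Qed.

Lemma crossing_edge_of_triangle T t T0 v w s : triangulation P T -> t \in T ->
  triangulation P T0 -> [set v; w] \in edges T0 -> [set v; w] \notin edges T ->
  0 < s < 1 -> conv P t (lerp (P v) (P w) s) ->
  exists a b, [/\ [set a; b] \in edges T, [set a; b] \subset t & segments_meet a b v w].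
Proof.
move=> HT tT HT0 vwT0 vwNT s01 yt.
have [vw [t0 t0T0 /andP[vt0 wt0]]] := edges2 vwT0.
suff [a [b [ha hb ab abvw]]] :
    exists a b, [/\ a \in t, b \in t, a != b & segments_meet a b v w].
  by exists a, b; rewrite (edges_of_mem tT) // subUset !sub1set ha hb.
have [vt|abvw] := leave_triangle HT tT HT0 t0T0 vt0 wt0 vw s01 yt; last exact: abvw.
have s01' : 0 < 1 - s < 1 by case/andP: s01 => ? ?; apply/andP; split; lra.
have yt' : conv P t (lerp (P w) (P v) (1 - s)) by rewrite -lerpC.
rewrite eq_sym in vw.
have [wt|[a [b [ha hb ab abwv]]]] := leave_triangle HT tT HT0 t0T0 wt0 vt0 vw s01' yt'.
  by case/negP: vwNT; rewrite (edges_of_mem tT) // eq_sym.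
by exists a, b; split=> //; apply: segments_meetC_r.
Qed.

End Geometry.

Section Flip.
Variables (R : realFieldType) (n : nat) (P : 'I_n -> (R * R)%type).
Implicit Types (T : {set {set 'I_n}}) (t e g : {set 'I_n}).

Lemma mem_phi T e x :
  reflect (x \notin e /\ exists t, [/\ t \in T, e \subset t & x \in t]) (x \in phi T e).
Proof.
rewrite /phi inE; apply: (iffP andP).
  by move=> [xNe /bigcupP[t /andP[tT et] xt]]; split=> //; exists t.
by move=> [xNe [t [tT et xt]]]; split=> //; apply/bigcupP; exists t; rewrite ?tT.
Qed.

Lemma card_triangle t : triangle P t -> #|t| = 3.
Proof.
case=> [a [b [c [-> hD]]]]; have [ab bc ac] := orient_neq0_distinct hD.
by rewrite -setUA cardsU1 cards2 bc !inE negb_or ab ac.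
Qed.

Lemma card_edges T g : g \in edges T -> #|g| = 2.
Proof. by rewrite inE => /andP[/eqP]. Qed.

Lemma triangle_apex T t e : triangulation P T -> t \in T -> e \subset t -> #|e| = 2 ->
  exists2 c, c \notin e & t = c |: e.
Proof.
move=> [triT _ _ _] tT et ce.
have /cards1P[c Ec] : #|t :\: e| == 1.
  by rewrite cardsD (setIidPr et) (card_triangle (triT t tT)) ce.
have : c \in t :\: e by rewrite Ec set11.
by rewrite inE => /andP[cNe _]; exists c => //; rewrite -(setID t e) (setIidPr et) Ec setUC.
Qed.

Lemma card_phi T e : triangulation P T -> admissible P T e -> #|phi T e| = 2.
Proof.
move=> HT [eT cardT _]; have ce := card_edges eT.
have /cards2P[t1 [t2 [t12 Et12]]] : #|[set t in T | e \subset t]| == 2 by rewrite cardT.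
have mem_t t : (t \in T) && (e \subset t) = (t == t1) || (t == t2).
  by move/setP/(_ t): Et12; rewrite !inE.
have /andP[t1T et1] : (t1 \in T) && (e \subset t1) by rewrite mem_t eqxx.
have /andP[t2T et2] : (t2 \in T) && (e \subset t2) by rewrite mem_t eqxx orbT.
have [c1 c1Ne Et1] := triangle_apex HT t1T et1 ce.
have [c2 c2Ne Et2] := triangle_apex HT t2T et2 ce.
have Ephi : phi T e = [set c1; c2].
  apply/setP => x; apply/mem_phi/set2P => [[xNe [t [tT et xt]]]|[]->].
  - move: (mem_t t); rewrite tT et => /esym/orP[]/eqP Et; move: xt; rewrite Et.
    + by rewrite Et1 in_setU1 (negbTE xNe) orbF; move=> /eqP ->; left.
    + by rewrite Et2 in_setU1 (negbTE xNe) orbF; move=> /eqP ->; right.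
  - by split=> //; exists t1; split=> //; rewrite Et1 setU11.
  - by split=> //; exists t2; split=> //; rewrite Et2 setU11.
rewrite Ephi cards2 (_ : c1 != c2) //; apply: contraNneq t12 => c12.
by rewrite Et1 Et2 c12.
Qed.

Lemma mem_flip_res T e t : t \in flip_res T e ->
  (t \in T /\ ~~ (e \subset t)) \/ exists2 v, v \in e & t = phi T e :|: [set v].
Proof.
rewrite /flip_res inE => /orP[|/imsetP[v ve ->]]; last by right; exists v.
by rewrite inE => /andP[]; left.
Qed.

Lemma flip_res_phiU T e v : v \in e -> phi T e :|: [set v] \in flip_res T e.
Proof. by move=> ve; rewrite /flip_res inE; apply/orP; right; apply: imset_f. Qed.

Lemma edges_flip_res T e g : triangulation P T -> admissible P T e ->
  g \in edges (flip_res T e) -> g = phi T e \/ (g \in edges T /\ g != e).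
Proof.
move=> HT eA; rewrite inE => /andP[/eqP cg /exists_inP[t' t'F gt']].
have [[t'T eNt']|[v ve Et']] := mem_flip_res t'F.
  by right; split; [exact: edges_of_sub t'T gt' cg | apply: contraNneq eNt' => <-].
have g_sub x : x \in g -> x = v \/ x \in phi T e.
  by move/(subsetP gt'); rewrite Et' in_setU in_set1 orbC => /orP[/eqP|]; [left | right].
have [vg|vNg] := boolP (v \in g); last first.
  left; apply/eqP; rewrite eqEcard (card_phi HT eA) cg leqnn andbT.
  by apply/subsetP => x xg; case: (g_sub x xg) => // xv; rewrite -xv xg in vNg.
have /cards1P[z Ez] : #|g :\ v| == 1 by move: (cg); rewrite (cardsD1 v g) vg add1n => -[->].
have zg : z \in g :\ v by rewrite Ez set11.
move: zg; rewrite in_setD1 => /andP[zv zg].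
have /mem_phi[zNe [t [tT et zt]]] : z \in phi T e.
  by case: (g_sub z zg) => // /eqP; rewrite (negbTE zv).
right; split; last by apply: contraNneq zNe => <-.
apply: (edges_of_sub tT) cg; apply/subsetP => x xg.
have [/eqP->|xv] := boolP (x == v); first exact: (subsetP et).
have : x \in g :\ v by rewrite in_setD1 xv xg.
by rewrite Ez in_set1 => /eqP ->.
Qed.

Lemma edges_flip_res_old T e g : admissible P T e -> g \in edges T -> g != e ->
  g \in edges (flip_res T e).
Proof.
move=> [eT _ _] gT ge; have cg := card_edges gT; have ce := card_edges eT.
move: gT; rewrite inE => /andP[_ /exists_inP[t tT gt]].
have [et|eNt] := boolP (e \subset t); last first.
  by apply: (edges_of_sub _ gt cg); rewrite !inE tT eNt.
have [v' v'e v'Ng] : exists2 v', v' \in e & v' \notin g.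
  apply/subsetPn; apply: contraNN ge => eg.
  by rewrite eq_sym eqEcard eg cg ce.
have /cards1P[v Ev] : #|e :\ v'| == 1.
  by move: (ce); rewrite (cardsD1 v' e) v'e add1n => -[->].
have : v \in e :\ v' by rewrite Ev set11.
rewrite in_setD1 => /andP[_ ve].
apply: (edges_of_sub (flip_res_phiU T ve)) cg; apply/subsetP => x xg.
rewrite in_setU in_set1; have [xe|xNe] := boolP (x \in e).
  have : x \in e :\ v' by rewrite in_setD1 xe andbT; apply: contraNneq v'Ng => <-.
  by rewrite Ev in_set1 => ->; rewrite orbT.
by apply/orP; left; apply/mem_phi; split=> //; exists t; rewrite (subsetP gt).
Qed.

Lemma phi_edges_flip_res T e : triangulation P T -> admissible P T e ->
  phi T e \in edges (flip_res T e).
Proof.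
move=> HT eA; have [eT _ _] := eA.
have /cards2P[v [v' [_ Ee]]] : #|e| == 2 by rewrite (card_edges eT).
have ve : v \in e by rewrite Ee set21.
by apply: (edges_of_sub (flip_res_phiU T ve)); rewrite ?subsetUl ?card_phi.
Qed.

Lemma crossing_edge_near_flip T e0 T0 e : triangulation P T -> admissible P T e0 ->
  triangulation P T0 -> e \in edges T0 -> e \notin edges T -> crosses P (phi T e0) e ->
  exists2 g, g \in edges T & crosses P g e /\ ((g == e0) || share_tri T g e0).
Proof.
move=> HT [_ _ quad_convex] HT0 eT0 eNT [_ [a [b [c [d [s [u [Eph Ee s01 u01 Ex]]]]]]]].
have apex_conv x : x \in phi T e0 -> exists t, [/\ t \in T, e0 \subset t & conv P t (P x)].
  by case/mem_phi=> _ [t [tT et xt]]; exists t; split=> //; apply: conv_vertex.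
have [t [tT e0t xt]] : exists t, [/\ t \in T, e0 \subset t & conv P t (lerp (P a) (P b) s)].
  apply: quad_convex; [by apply: apex_conv; rewrite Eph !inE eqxx ?orbT .. |].
  by case/andP: s01 => ? ?; rewrite !ltW.
rewrite Ex in xt; rewrite Ee in eT0 eNT *.
have [a' [b' [gT gt [s' [u' [s'01 u'01 Ex']]]]]] :=
  crossing_edge_of_triangle HT tT HT0 eT0 eNT u01 xt.
exists [set a'; b'] => //; split.
  split; first by apply: contraNneq eNT => <-.
  by exists a', b', c, d, s', u'.
have [//|ne] := eqVneq [set a'; b'] e0.
by rewrite /share_tri ne; apply/exists_inP; exists t; rewrite ?gt ?e0t.
Qed.

End Flip.

Section FlipSequence.
Variables (R : realFieldType) (n : nat) (P : 'I_n -> (R * R)%type).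
Variables (Ti Tf : {set {set 'I_n}}) (F : seq {set 'I_n}).
Hypothesis validF : valid P Ti F Tf.

Lemma outcomeS j : j < size F -> outcome Ti F j.+1 = flip_res (outcome Ti F j) (eps F j).
Proof. by move=> jF; rewrite /outcome (take_nth set0 jF) foldl_rcons. Qed.

Lemma triangulation_outcome j : j <= size F -> triangulation P (outcome Ti F j).
Proof.
have [Ti_tri steps _] := validF.
by case: j => [_|j jF]; [rewrite /outcome take0 | have [] := steps j jF].
Qed.

Lemma admissible_outcome j : j < size F -> admissible P (outcome Ti F j) (eps F j).
Proof. by have [_ steps _] := validF; move=> jF; have [] := steps j jF. Qed.

Lemma edges_outcomeS j g : j < size F -> g \in edges (outcome Ti F j.+1) ->
  g = phiF Ti F j \/ (g \in edges (outcome Ti F j) /\ g != eps F j).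
Proof.
move=> jF; rewrite outcomeS //; apply: edges_flip_res.
  exact: triangulation_outcome (ltnW jF).
exact: admissible_outcome.
Qed.

Lemma phiF_edges_outcomeS j : j < size F -> phiF Ti F j \in edges (outcome Ti F j.+1).
Proof.
move=> jF; rewrite outcomeS //; apply: phi_edges_flip_res.
  exact: triangulation_outcome (ltnW jF).
exact: admissible_outcome.
Qed.

Lemma edges_outcome_persist j m g : j <= m -> m <= size F ->
  g \in edges (outcome Ti F j) -> (forall q, j <= q -> q < m -> eps F q != g) ->
  g \in edges (outcome Ti F m).
Proof.
elim: m => [|m IH] jm mF gj unflipped; first by move: jm; rewrite leqn0 => /eqP <-.
move: jm; rewrite leq_eqVlt ltnS => /orP[/eqP <- //|jm].
rewrite outcomeS //; apply: edges_flip_res_old; first exact: admissible_outcome.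
  by apply: IH => // [|q jq qm]; [exact: ltnW | apply: unflipped => //; exact: ltnW].
by rewrite eq_sym; apply: unflipped.
Qed.

Section Crossings.
Variables (i h : 'I_(size F)).
Hypotheses (ih : i < h) (eps_ih : eps F i != eps F h)
  (cross_h : crosses P (phiF Ti F h) (eps F i))
  (unflipped : forall p : 'I_(size F), i < p -> p < h -> eps F p != eps F i).

Lemma eps_notin_edges j : i < j -> j <= h -> eps F i \notin edges (outcome Ti F j).
Proof.
move=> ij jh; apply/negP => ej; have hF := ltn_ord h.
have eh : eps F i \in edges (outcome Ti F h.+1).
  apply: (edges_outcome_persist _ _ ej) => // [|q jq]; first lia.
  rewrite ltnS leq_eqVlt => /orP[/eqP->|qh]; first by rewrite eq_sym.
  by apply: (unflipped (p := Ordinal (ltn_trans qh hF))) => //=; lia.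
apply: (edges_noncrossing (triangulation_outcome hF) (phiF_edges_outcomeS hF) eh).
exact: cross_h.
Qed.

Definition crossings_traced (j : nat) : Prop :=
  forall g, g \in edges (outcome Ti F j) -> crosses P g (eps F i) ->
  exists p : 'I_(size F), [/\ i <= p < j, phiF Ti F p = g, connect (adjD Ti F) i p &
    forall q : 'I_(size F), p < q -> q < j -> eps F q != g].

Lemma connect_crossing_flip (j : 'I_(size F)) : i < j -> j <= h ->
  crossings_traced j -> crosses P (phiF Ti F j) (eps F i) -> connect (adjD Ti F) i j.
Proof.
move=> ij jh traced cross_j; have jF := ltn_ord j; have iF := ltn_ord i.
have eTi : eps F i \in edges (outcome Ti F i) by have [] := admissible_outcome iF.
have [g gT [g_cross g_near]] := crossing_edge_near_flip
  (triangulation_outcome (ltnW jF)) (admissible_outcome jF)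
  (triangulation_outcome (ltnW iF)) eTi (eps_notin_edges ij jh) cross_j.
have [p [/andP[ip pj] Ep ip_conn unflipped_p]] := traced g gT g_cross.
apply: connect_trans ip_conn (connect1 _).
rewrite /adjD pj Ep g_near /=; apply/forallP => q; apply/implyP => /andP[pq qj].
exact: unflipped_p.
Qed.

Lemma crossings_traced_first : crossings_traced i.
Proof.
move=> g gT g_cross; have iF := ltn_ord i.
have [eTi _ _] := admissible_outcome iF.
by case: (edges_noncrossing (triangulation_outcome (ltnW iF)) gT eTi g_cross).
Qed.

Lemma crossings_tracedS j : i <= j -> j < h -> crossings_traced j ->
  crossings_traced j.+1.
Proof.
move=> ij jh traced g gT g_cross; have jF : j < size F by apply: ltn_trans jh _.
have [Eg|[gTj g_eps]] := edges_outcomeS jF gT.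
  exists (Ordinal jF); split=> /=; [by rewrite ij ltnSn | by rewrite Eg | |]; last first.
    by move=> q jq; rewrite ltnS leqNgt jq.
  move: ij; rewrite leq_eqVlt => /orP[/eqP ij|ij].
    by have -> : Ordinal jF = i by apply: val_inj.
  by apply: (connect_crossing_flip (j := Ordinal jF) ij (ltnW jh) traced); rewrite -Eg.
have [p [/andP[ip pj] Ep ip_conn unflipped_p]] := traced g gTj g_cross.
exists p; split=> //; first by rewrite ip ltnW.
move=> q pq; rewrite ltnS leq_eqVlt => /orP[/eqP qj|]; last exact: unflipped_p.
by rewrite qj eq_sym.
Qed.

Lemma crossings_traced_last : crossings_traced h.
Proof.
suff traced d : i + d <= h -> crossings_traced (i + d).
  by move: (traced (h - i)); rewrite subnKC ?(ltnW ih) // => /(_ (leqnn h)).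
elim: d => [|d IH] idh; first by rewrite addn0; exact: crossings_traced_first.
rewrite addnS in idh *; apply: crossings_tracedS idh (IH (ltnW idh)).
exact: leq_addr.
Qed.

Lemma connect_first_last : connect (adjD Ti F) i h.
Proof. exact: connect_crossing_flip ih (leqnn h) crossings_traced_last cross_h. Qed.

End Crossings.

End FlipSequence.

Lemma component_closed_path n (T : {set {set 'I_n}}) (F : seq {set 'I_n})
    (C : {set 'I_(size F)}) a s :
  component T F C -> a \in C -> path (adjD T F) a s -> all (fun x => x \in C) (a :: s).
Proof.
move=> [v ->] aC pth; rewrite inE in aC.
have wpth : path (wadj T F) a s by apply: sub_path pth => x y xy; rewrite /wadj xy.
apply/allP => x xs; rewrite inE; apply: connect_trans aC _.
exact: path_connect wpth x xs.
Qed.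

Theorem lemma3 (R : realFieldType) (n : nat) (P : 'I_n -> (R * R)%type)
  (HP : injective P) (Ti Tf : {set {set 'I_n}}) (k : nat) (F : seq {set 'I_n})
  (Hsol : solution P Ti Tf k F) (Hnorm : normalized Ti Tf F)
  (C : {set 'I_(size F)}) (HC : component Ti F C)
  (i h : 'I_(size F)) (Hih : (i < h)%N) (Hne : eps F i != eps F h)
  (HiC : i \in C) (HhC : h \in C)
  (Hcross : crosses P (phiF Ti F h) (eps F i))
  (Hnf : forall p : 'I_(size F), (i < p)%N -> (p < h)%N -> eps F p != eps F i) :
  exists s : seq 'I_(size F),
    [/\ path (adjD Ti F) i s, last i s = h & all (fun x => x \in C) (i :: s)].
Proof.
have [_ _ validF _ _] := Hsol.
have /connectP[s i_s ->] := connect_first_last validF Hih Hne Hcross Hnf.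
by exists s; split=> //; apply: component_closed_path HC HiC i_s.
Qed.
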